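(* Let $\Sigma$ be a finitary signature, $X$ a set, and fix $p\in X\cup\Sigma_0$. Consider the set $\Psi_\Sigma X$ of all $\Sigma$-trees over $X$, ordered by cutting. Then every strictly increasing sequence $s_0<s_1<s_2<\cdots$ in $\Psi_\Sigma X$ consists of finite trees (i.e. lies in $\Phi_\Sigma X$), and it has exactly one upper bound in $\Psi_\Sigma X$.
   Context: A finitary signature is a sequence $\Sigma=(\Sigma_n)_{n\in\mathbb N}$ of sets ($\Sigma_n$ = $n$-ary operation symbols). A $\Sigma$-tree is an ordered (planar) rooted tree, finite or infinite, whose nodes are labelled in $\bigcup_n\Sigma_n$ such that a node labelled by $\sigma\in\Sigma_n$ has exactly $n$ children; trees are considered up to isomorphism. For a set $X$, a $\Sigma$-tree over $X$ is a $(\Sigma+X)$-tree where the elements of $X$ are added as nullary symbols. $\Psi_\Sigma X$ is the set of all $\Sigma$-trees over $X$ and $\Phi_\Sigma X\subseteq\Psi_\Sigma X$ the set of finite ones. For a tree $t$ and $n\in\mathbb N$, the cutting $\partial_n t$ is the tree obtained from $t$ by deleting all nodes of height $>n$ and relabelling all remaining nodes of height $n$ (which are now leaves) by $p$ (the root has height $0$). The order by cutting on $\Psi_\Sigma X$: $s\le s'$ iff $s=s'$ or $s=\partial_n s'$ for some $n\in\mathbb N$. *)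

(* Sigma-trees represented canonically as partial labelling
   functions on positions (Dewey addresses), which is exactly one
   representative per isomorphism class of ordered rooted trees. *)
From Stdlib Require Import List Arith.
Import ListNotations.

(* A finitary signature: a type of operation symbols with arities;
   Sigma_n = { s | ar s = n }. *)

Definition label (Sig X : Type) := (Sig + X)%type.

Definition larity {Sig X : Type} (ar : Sig -> nat) (l : label Sig X) : nat :=
  match l with inl s => ar s | inr _ => 0 end.

(* A position is a list of child indices from the root; its height is its
   length.  A tree assigns to each position its label, or None if the
   position is not a node. *)
Definition pretree (Sig X : Type) := list nat -> option (label Sig X).

Definition is_tree {Sig X : Type} (ar : Sig -> nat) (t : pretree Sig X) : Prop :=
  t [] <> None /\
  forall (w : list nat) (i : nat),
    t (w ++ [i]) <> None <-> exists l, t w = Some l /\ i < larity ar l.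

Definition finite_tree {Sig X : Type} (t : pretree Sig X) : Prop :=
  exists nodes : list (list nat), forall w, t w <> None -> In w nodes.

Definition cut {Sig X : Type} (p : label Sig X) (n : nat) (t : pretree Sig X)
  : pretree Sig X :=
  fun w =>
    if length w <? n then t w
    else if length w =? n then
      match t w with Some _ => Some p | None => None end
    else None.

Definition cut_le {Sig X : Type} (p : label Sig X) (s s' : pretree Sig X) : Prop :=
  s = s' \/ exists n, s = cut p n s'.

Definition cut_lt {Sig X : Type} (p : label Sig X) (s s' : pretree Sig X) : Prop :=
  cut_le p s s' /\ s <> s'.

From Stdlib Require Import List Arith Lia FunctionalExtensionality IndefiniteDescription.
Import ListNotations.

(* If s_0 < s_1 < ... then every s_i is a proper cutting s_i = cut (N i) s_(i+1)
   of its successor.  Cutting a cut tree again at a greater height changes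
   nothing, so properness forces the depths N i to increase strictly; in particular
   N i >= i and the trees of the chain eventually agree on every position w
   (from index |w| + 1 on).  The limit tree is read off this stabilisation:
   limit w := s_(|w|+1) w.  Then s_i = cut (N i) limit for every i, which gives
   at once that each s_i has bounded height (hence is finite) and that the
   limit is an upper bound; and any upper bound v must cut every s_i at a depth
   beyond N i, so it agrees with the limit everywhere. *)

Section Cutting.
Context {Sig X : Type} (p : label Sig X).

Lemma cut_below (n : nat) (t : pretree Sig X) (w : list nat) :
  length w < n -> cut p n t w = t w.
Proof.
  intros Hw. unfold cut. destruct (Nat.ltb_spec (length w) n); [reflexivity | lia].
Qed.

Lemma cut_height (n : nat) (t : pretree Sig X) (w : list nat) :
  cut p n t w <> None -> length w <= n.
Proof.
  unfold cut. destruct (Nat.ltb_spec (length w) n); [lia|].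
  destruct (Nat.eqb_spec (length w) n); [lia | congruence].
Qed.

Lemma cut_ext (n : nat) (t t' : pretree Sig X) :
  (forall w, length w <= n -> t w = t' w) -> cut p n t = cut p n t'.
Proof.
  intros Htt'. extensionality w. unfold cut.
  destruct (Nat.ltb_spec (length w) n), (Nat.eqb_spec (length w) n);
    try rewrite Htt' by lia; reflexivity.
Qed.

Lemma cut_cut (m n : nat) (t : pretree Sig X) :
  m <= n -> cut p n (cut p m t) = cut p m t.
Proof.
  intros H. extensionality w. unfold cut.
  destruct (Nat.ltb_spec (length w) n), (Nat.eqb_spec (length w) n),
    (Nat.ltb_spec (length w) m), (Nat.eqb_spec (length w) m);
    try lia; try reflexivity; destruct (t w); reflexivity.
Qed.

(* In a proper chain a = cut n b, b = cut m c, the depths increase: otherwise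
   a = cut n (cut m c) = cut m c = b. *)
Lemma proper_cut_depth (a b c : pretree Sig X) (n m : nat) :
  a = cut p n b -> b = cut p m c -> a <> b -> n < m.
Proof.
  intros Ha Hb Hab. destruct (Nat.lt_ge_cases n m) as [Hlt | Hge]; [exact Hlt|].
  exfalso. apply Hab. rewrite Ha, Hb. apply cut_cut. exact Hge.
Qed.

End Cutting.

Fixpoint level {Sig X : Type} (ar : Sig -> nat) (t : pretree Sig X) (k : nat)
  : list (list nat) :=
  match k with
  | 0 => [[]]
  | S k => flat_map (fun w => match t w with
                              | Some l => map (fun i => w ++ [i]) (seq 0 (larity ar l))
                              | None => [] end) (level ar t k)
  end.

Lemma level_complete {Sig X : Type} (ar : Sig -> nat) (t : pretree Sig X) :
  is_tree ar t -> forall w, t w <> None -> In w (level ar t (length w)).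
Proof.
  intros [_ Ht] w. induction w as [|i w IH] using rev_ind.
  - intros _. simpl. auto.
  - intros Hw. rewrite length_app, Nat.add_1_r. simpl.
    apply Ht in Hw. destruct Hw as [l [Hl Hi]].
    apply in_flat_map. exists w. split.
    + apply IH. rewrite Hl. discriminate.
    + rewrite Hl. apply (in_map (fun j => w ++ [j])). apply in_seq. lia.
Qed.

(* A tree of bounded height is finite, since its arities are finite. *)
Lemma finite_of_bounded_height {Sig X : Type} (ar : Sig -> nat)
  (t : pretree Sig X) (n : nat) :
  is_tree ar t -> (forall w, t w <> None -> length w <= n) -> finite_tree t.
Proof.
  intros Ht Hb. exists (flat_map (level ar t) (seq 0 (S n))).
  intros w Hw. apply in_flat_map. exists (length w). split.
  - apply in_seq. specialize (Hb w Hw). lia.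
  - apply level_complete; auto.
Qed.

Section ProperChain.
Context {Sig X : Type} (ar : Sig -> nat) (p : label Sig X).

Variables (s : nat -> pretree Sig X) (N : nat -> nat).
Hypothesis s_cut : forall i, s i = cut p (N i) (s (S i)).
Hypothesis s_proper : forall i, s i <> s (S i).

Lemma depth_succ (i : nat) : N i < N (S i).
Proof. exact (proper_cut_depth p _ _ _ _ _ (s_cut i) (s_cut (S i)) (s_proper i)). Qed.

Lemma depth_mono (i j : nat) : i <= j -> N i <= N j.
Proof.
  induction 1 as [|j _ IH]; [lia|]. specialize (depth_succ j). lia.
Qed.

Lemma depth_ge (i : nat) : i <= N i.
Proof. induction i as [|i IH]; [lia|]. specialize (depth_succ i). lia. Qed.

Lemma chain_agree (i j : nat) (w : list nat) :
  i <= j -> length w < N i -> s i w = s j w.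
Proof.
  intros Hij Hw. induction Hij as [|j Hij IH]; [reflexivity|].
  rewrite IH, s_cut. apply cut_below.
  specialize (depth_mono i j Hij). lia.
Qed.

(* The limit of the chain: position w is read in s (|w| + 1), after which the
   chain is stable at w. *)
Definition limit : pretree Sig X := fun w => s (S (length w)) w.

Lemma limit_stable (j : nat) (w : list nat) :
  S (length w) <= j -> s j w = limit w.
Proof.
  intros Hj. unfold limit. symmetry. apply chain_agree; [exact Hj|].
  specialize (depth_ge (S (length w))). lia.
Qed.

Lemma limit_below (i : nat) (w : list nat) : length w < N i -> s i w = limit w.
Proof.
  intros Hw. rewrite (chain_agree i (i + S (length w))) by (lia || exact Hw).
  apply limit_stable. lia.
Qed.

Lemma chain_cut_limit (i : nat) : s i = cut p (N i) limit.
Proof.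
  rewrite s_cut. apply cut_ext. intros w Hw.
  apply limit_below. specialize (depth_succ i). lia.
Qed.

Lemma limit_is_tree : (forall i, is_tree ar (s i)) -> is_tree ar limit.
Proof.
  intros hs. split.
  - rewrite <- (limit_stable 1 []) by (simpl; lia). apply (hs 1).
  - intros w i.
    rewrite <- (limit_stable (S (S (length w))) (w ++ [i]))
      by (rewrite length_app; simpl; lia).
    rewrite <- (limit_stable (S (S (length w))) w) by lia.
    apply hs.
Qed.

(* Any upper bound of the chain is the limit: an upper bound v cuts to
   s (|w| + 2) at a depth beyond N (|w| + 1) > |w|, so it agrees with the
   limit at w. *)
Lemma upper_bound_is_limit (v : pretree Sig X) :
  (forall i, cut_le p (s i) v) -> v = limit.
Proof.
  intros Hle. extensionality w. set (i := S (length w)).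
  rewrite <- (limit_stable (S i) w) by (unfold i; lia).
  destruct (Hle (S i)) as [E | [m E]].
  - rewrite E. reflexivity.
  - assert (Hm : N i < m) by exact (proper_cut_depth p _ _ _ _ _ (s_cut i) E (s_proper i)).
    rewrite E, cut_below; [reflexivity|].
    specialize (depth_ge i). unfold i in *. lia.
Qed.

End ProperChain.

Theorem mainTheorem1 (Sig X : Type) (ar : Sig -> nat)
  (p : label Sig X) (hp : larity ar p = 0)
  (s : nat -> pretree Sig X)
  (hs : forall i, is_tree ar (s i))
  (hinc : forall i j, i < j -> cut_lt p (s i) (s j)) :
  (forall i, finite_tree (s i)) /\
  (exists u, (is_tree ar u /\ forall i, cut_le p (s i) u) /\
     forall v, is_tree ar v -> (forall i, cut_le p (s i) v) -> v = u).
Proof.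
  assert (s_proper : forall i, s i <> s (S i)) by (intros i; apply (hinc i (S i)); lia).
  assert (depth_exists : forall i, exists n, s i = cut p n (s (S i))).
  { intros i. destruct (hinc i (S i) ltac:(lia)) as [[E | E] _].
    - contradiction (s_proper i).
    - exact E. }
  destruct (functional_choice _ depth_exists) as [N s_cut].
  pose proof (chain_cut_limit p s N s_cut s_proper) as s_limit.
  split.
  - intros i. apply (finite_of_bounded_height ar (s i) (N i) (hs i)).
    intros w Hw. rewrite s_limit in Hw. exact (cut_height p _ _ _ Hw).
  - exists (limit s). split; [split|].
    + exact (limit_is_tree ar p s N s_cut s_proper hs).
    + intros i. right. exists (N i). apply s_limit.
    + intros v _ Hle. exact (upper_bound_is_limit p s N s_cut s_proper v Hle).
Qed.
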